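(* Let $\mathcal{I}$ be an ideal on $\omega$ such that $\mathrm{fin}\subseteq\mathcal{I}$. If there is a Borel $\mathcal{I}$-MED family $\mathcal{E}\subseteq\omega^\omega$, then there is a closed $\mathcal{I}$-MED family (closed in $\omega^\omega$ with the product topology).
   Context: $\mathrm{fin}$ is the ideal of finite subsets of $\omega$. Functions $f,g\in\omega^\omega$ are $\mathcal{I}$-eventually different ($\mathcal{I}$-ED) if $\{n:f(n)=g(n)\}\in\mathcal{I}$; $\mathcal{E}\subseteq\omega^\omega$ is an $\mathcal{I}$-MED family if any two distinct members are $\mathcal{I}$-ED and for every $h\in\omega^\omega$ there is $f\in\mathcal{E}$ such that $f,h$ are not $\mathcal{I}$-ED. *)

Definition natset := nat -> Prop.
Definition baire := nat -> nat.
Definition bset := baire -> Prop.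

Definition finite_set (A : natset) : Prop := exists N, forall k, A k -> k < N.

Definition is_ideal (I : natset -> Prop) : Prop :=
  I (fun _ => False) /\
  (forall A B : natset, I B -> (forall n, A n -> B n) -> I A) /\
  (forall A B : natset, I A -> I B -> I (fun n => A n \/ B n)) /\
  ~ I (fun _ => True).

Definition contains_fin (I : natset -> Prop) : Prop :=
  forall A, finite_set A -> I A.

Definition I_ED (I : natset -> Prop) (f g : baire) : Prop :=
  I (fun n => f n = g n).

Definition I_MED (I : natset -> Prop) (E : bset) : Prop :=
  (forall f g, E f -> E g -> f <> g -> I_ED I f g) /\
  (forall h : baire, exists f, E f /\ ~ I_ED I f h).

Definition baire_open (A : bset) : Prop :=
  forall f, A f -> exists n, forall g, (forall k, k < n -> g k = f k) -> A g.

Definition baire_closed (A : bset) : Prop := baire_open (fun f => ~ A f).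

Inductive borel : bset -> Prop :=
| borel_open A : baire_open A -> borel A
| borel_compl A : borel A -> borel (fun f => ~ A f)
| borel_cunion (F : nat -> bset) : (forall n, borel (F n)) -> borel (fun f => exists n, F n f)
| borel_ext A B : borel A -> (forall f, A f <-> B f) -> borel B.

From Stdlib Require Import Arith Lia Classical ClassicalEpsilon FunctionalExtensionality Cantor.

(* Every Borel set B is the projection of a closed relation F on the Baire space with at most
   one witness x over each point f; this is proved for B and its complement simultaneously by
   induction on B.  Given a Borel I-MED family E with such an F, a point f of E and its witness
   x are coded into one g: along an injective sequence a put g (a k) = <f k, x k>, and elsewhere
   g n = f (b n) for a left inverse b of a.  The codes form a closed set, distinct codes decode
   to distinct members of E, and g n = g' n forces f (b n) = f' (b n).  If I contains an infinite
   set A, take a with range in A and b the identity off that range: the agreement sets of codes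
   and of their decodes then differ by a subset of A.  Otherwise I = fin, and we take a k = 2k+1 and
   b n = n/2, so that agreement sets of codes are finite exactly when those of decodes are. *)

Definition agree (f g : baire) (n : nat) : Prop := forall k, k < n -> f k = g k.

Lemma agree_refl f n : agree f f n.
Proof. intros k _; reflexivity. Qed.

Lemma agree_sym f g n : agree f g n -> agree g f n.
Proof. intros H k Hk; symmetry; auto. Qed.

Lemma agree_trans f g h n : agree f g n -> agree g h n -> agree f h n.
Proof. intros H1 H2 k Hk; rewrite H1; auto. Qed.

Lemma agree_le f g n m : agree f g n -> m <= n -> agree f g m.
Proof. intros H Hm k Hk; apply H; lia. Qed.

Definition closed_rel (P : baire -> baire -> Prop) : Prop :=
  forall f x, ~ P f x -> exists n, forall g y, agree g f n -> agree y x n -> ~ P g y.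

Definition local_rel (n : nat) (P : baire -> baire -> Prop) : Prop :=
  forall f x g y, agree g f n -> agree y x n -> P f x -> P g y.

Definition continuous (phi : baire -> baire) : Prop :=
  forall f n, exists m, forall g, agree g f m -> agree (phi g) (phi f) n.

Lemma local_rel_closed n P : local_rel n P -> closed_rel P.
Proof.
  intros HP f x Hfx. exists n. intros g y Hg Hy Hgy.
  apply Hfx, (HP g y f x); auto using agree_sym.
Qed.

Lemma closed_rel_forall {T : Type} (P : T -> baire -> baire -> Prop) :
  (forall i, closed_rel (P i)) -> closed_rel (fun f x => forall i, P i f x).
Proof.
  intros HP f x Hfx. apply not_all_ex_not in Hfx as [i Hi].
  destruct (HP i f x Hi) as [n Hn]. exists n. intros g y Hg Hy Hgy. exact (Hn g y Hg Hy (Hgy i)).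
Qed.

Lemma closed_rel_and P Q :
  closed_rel P -> closed_rel Q -> closed_rel (fun f x => P f x /\ Q f x).
Proof.
  intros HP HQ f x Hfx. destruct (classic (P f x)) as [Hp|Hp].
  - destruct (HQ f x) as [n Hn]; [tauto|].
    exists n. intros g y Hg Hy [_ Hq]. exact (Hn g y Hg Hy Hq).
  - destruct (HP f x Hp) as [n Hn].
    exists n. intros g y Hg Hy [Hp' _]. exact (Hn g y Hg Hy Hp').
Qed.

Lemma closed_rel_impl n C P :
  local_rel n C -> closed_rel P -> closed_rel (fun f x => C f x -> P f x).
Proof.
  intros HC HP f x Hfx. apply imply_to_and in Hfx as [Hc Hp].
  destruct (HP f x Hp) as [m Hm]. exists (max n m). intros g y Hg Hy Hgy.
  apply (Hm g y); [apply (agree_le _ _ _ _ Hg); lia | apply (agree_le _ _ _ _ Hy); lia |].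
  apply Hgy, (HC f x); [apply (agree_le _ _ _ _ Hg) | apply (agree_le _ _ _ _ Hy) |]; auto; lia.
Qed.

Lemma closed_rel_comp phi psi P :
  continuous phi -> continuous psi -> closed_rel P -> closed_rel (fun f x => P (phi f) (psi x)).
Proof.
  intros Hphi Hpsi HP f x Hfx. destruct (HP _ _ Hfx) as [n Hn].
  destruct (Hphi f n) as [m1 Hm1]. destruct (Hpsi x n) as [m2 Hm2].
  exists (max m1 m2). intros g y Hg Hy.
  apply Hn; [apply Hm1, (agree_le _ _ _ _ Hg) | apply Hm2, (agree_le _ _ _ _ Hy)]; lia.
Qed.

Lemma baire_closed_diag P : closed_rel P -> baire_closed (fun f => P f f).
Proof.
  intros HP f Hf. destruct (HP f f Hf) as [n Hn]. exists n. intros g Hg. exact (Hn g g Hg Hg).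
Qed.

Lemma continuous_id : continuous (fun f => f).
Proof. intros f n. exists n. auto. Qed.

Lemma continuous_recode (p h : nat -> nat) : continuous (fun x m => h (x (p m))).
Proof.
  intros f n. induction n as [|n [m Hm]].
  - exists 0. intros g _ k Hk. lia.
  - exists (max m (S (p n))). intros g Hg k Hk.
    destruct (Nat.eq_dec k n) as [->|Hne].
    + f_equal. apply Hg. lia.
    + apply Hm; [apply (agree_le _ _ _ _ Hg) |]; lia.
Qed.

Definition column (i : nat) (x : baire) : baire := fun m => x (to_nat (i, m)).

Definition interleave (W : nat -> baire) : baire := fun k => W (fst (of_nat k)) (snd (of_nat k)).

Lemma continuous_column i : continuous (column i).
Proof. exact (continuous_recode (fun m => to_nat (i, m)) (fun v => v)). Qed.

Lemma column_interleave W i : column i (interleave W) = W i.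
Proof.
  apply functional_extensionality; intro m. unfold column, interleave.
  rewrite cancel_of_to. reflexivity.
Qed.

Lemma column_inj x y : (forall i, column i x = column i y) -> x = y.
Proof.
  intro H. apply functional_extensionality; intro k. rewrite <- (cancel_to_of k).
  destruct (of_nat k) as [i m]. exact (equal_f (H i) m).
Qed.

Definition scons (n : nat) (x : baire) : baire := fun k => match k with 0 => n | S k => x k end.

Definition stail (x : baire) : baire := fun k => x (S k).

Definition unique_witnesses (F : baire -> baire -> Prop) (B : bset) : Prop :=
  forall f, (B f <-> exists x, F f x) /\ (forall x y, F f x -> F f y -> x = y).

Definition unique_closed_proj (B : bset) : Prop :=
  exists F, closed_rel F /\ unique_witnesses F B.

Lemma unique_closed_proj_ext A B :
  unique_closed_proj A -> (forall f, A f <-> B f) -> unique_closed_proj B.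
Proof.
  intros [F [HF HFA]] HAB. exists F. split; [exact HF|].
  intro f. rewrite <- HAB. apply HFA.
Qed.

Lemma unique_closed_proj_local n B :
  (forall f g, agree g f n -> B f -> B g) -> unique_closed_proj B.
Proof.
  intro HB. exists (fun f x => B f /\ forall m, x m = 0). split.
  - apply closed_rel_and.
    + apply (local_rel_closed n). intros f x g y Hg _. apply HB, Hg.
    + apply closed_rel_forall; intro m. apply (local_rel_closed (S m)).
      intros f x g y _ Hy Hx. rewrite (Hy m) by lia. exact Hx.
  - intro f. split; [split|].
    + intro Hf. exists (fun _ => 0). auto.
    + intros [x [Hf _]]. exact Hf.
    + intros x y [_ Hx] [_ Hy]. apply functional_extensionality; intro m. rewrite Hx, Hy. reflexivity.
Qed.

Lemma unique_closed_proj_bigcap (C : nat -> bset) :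
  (forall i, unique_closed_proj (C i)) -> unique_closed_proj (fun f => forall i, C i f).
Proof.
  intro HC. destruct (choice _ HC) as [FC HFC].
  exists (fun f x => forall i, FC i f (column i x)). split.
  - apply closed_rel_forall; intro i.
    apply (closed_rel_comp (fun f => f) (column i) (FC i));
      [apply continuous_id | apply continuous_column | apply HFC].
  - intro f. split; [split|].
    + intro Hf. destruct (choice (fun i w => FC i f w)) as [W HW].
      { intro i. apply (proj2 (HFC i) f), Hf. }
      exists (interleave W). intro i. rewrite column_interleave. apply HW.
    + intros [x Hx] i. apply (proj2 (HFC i) f). eauto.
    + intros x y Hx Hy. apply column_inj; intro i.
      exact (proj2 (proj2 (HFC i) f) _ _ (Hx i) (Hy i)).
Qed.

Section Union.

Variable B : nat -> bset.
Variables FB FN : nat -> baire -> baire -> Prop.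

(* A witness [x] for [f] in the union records in [x 0] the least [n] with [B n f], and in
   column [i] of [stail x] a witness for [~ B i f] below [n], for [B n f] at [n], and zero above. *)
Definition union_stage (n i : nat) (f w : baire) : Prop :=
  (i < n -> FN i f w) /\ (i = n -> FB i f w) /\ (n < i -> forall m, w m = 0).

Definition union_witness (f x : baire) : Prop :=
  forall i, union_stage (x 0) i f (column i (stail x)).

Lemma union_witness_closed :
  (forall i, closed_rel (FB i)) -> (forall i, closed_rel (FN i)) -> closed_rel union_witness.
Proof.
  intros HFB HFN. apply closed_rel_forall; intro i. unfold union_stage.
  assert (Hcol : continuous (fun x => column i (stail x)))
    by exact (continuous_recode (fun m => S (to_nat (i, m))) (fun v => v)).
  assert (Hloc : forall Q : nat -> Prop, local_rel 1 (fun f x => Q (x 0)))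
    by (intros Q f x g y _ Hy; rewrite (Hy 0) by lia; auto).
  apply closed_rel_and; [|apply closed_rel_and].
  - apply (closed_rel_impl 1); [apply (Hloc (fun v => i < v)) |].
    apply (closed_rel_comp (fun f => f) _ (FN i)); [apply continuous_id | exact Hcol | apply HFN].
  - apply (closed_rel_impl 1); [apply (Hloc (fun v => i = v)) |].
    apply (closed_rel_comp (fun f => f) _ (FB i)); [apply continuous_id | exact Hcol | apply HFB].
  - apply (closed_rel_impl 1); [apply (Hloc (fun v => v < i)) |].
    apply closed_rel_forall; intro m. apply (local_rel_closed (S (S (to_nat (i, m))))).
    intros f x g y _ Hy Hx. unfold column, stail in *. rewrite (Hy (S (to_nat (i, m)))) by lia.
    exact Hx.
Qed.

Hypothesis FB_B : forall i, unique_witnesses (FB i) (B i).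
Hypothesis FN_B : forall i, unique_witnesses (FN i) (fun f => ~ B i f).

Lemma union_witness_exists f : (exists i, B i f) -> exists x, union_witness f x.
Proof.
  intro Hex.
  destruct (dec_inh_nat_subset_has_unique_least_element (fun n => B n f) (fun n => classic _) Hex)
    as [n [[Hn Hleast] _]].
  destruct (choice (fun i w => union_stage n i f w)) as [W HW].
  { intro i. destruct (lt_eq_lt_dec i n) as [[Hi| <-]|Hi].
    - destruct (proj1 (proj1 (FN_B i f))) as [w Hw].
      { intro Hb. specialize (Hleast i Hb). lia. }
      exists w. repeat split; intros; auto; lia.
    - destruct (proj1 (proj1 (FB_B i f)) Hn) as [w Hw].
      exists w. repeat split; intros; auto; lia.
    - exists (fun _ => 0). repeat split; intros; auto; lia. }
  exists (scons n (interleave W)). intro i.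
  change (union_stage n i f (column i (interleave W))). rewrite column_interleave. apply HW.
Qed.

Lemma union_witness_mem f x : union_witness f x -> B (x 0) f.
Proof. intro Hx. apply (FB_B (x 0) f). eexists. apply (Hx (x 0)). reflexivity. Qed.

Lemma union_witness_unique f x y : union_witness f x -> union_witness f y -> x = y.
Proof.
  intros Hx Hy.
  assert (Hnot_lt : forall u v, union_witness f u -> union_witness f v -> ~ u 0 < v 0).
  { intros u v Hu Hv Hlt.
    apply (proj2 (proj1 (FN_B (u 0) f))); [eexists; apply (Hv (u 0)); exact Hlt|].
    exact (union_witness_mem f u Hu). }
  assert (Hxy0 : x 0 = y 0).
  { pose proof (Hnot_lt x y Hx Hy). pose proof (Hnot_lt y x Hy Hx). lia. }
  assert (Hcols : forall i, column i (stail x) = column i (stail y)).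
  { intro i. destruct (Hx i) as [HxN [HxB HxZ]]. destruct (Hy i) as [HyN [HyB HyZ]].
    rewrite <- Hxy0 in HyN, HyB, HyZ.
    destruct (lt_eq_lt_dec i (x 0)) as [[Hi|Hi]|Hi].
    - exact (proj2 (FN_B i f) _ _ (HxN Hi) (HyN Hi)).
    - exact (proj2 (FB_B i f) _ _ (HxB Hi) (HyB Hi)).
    - apply functional_extensionality; intro m. rewrite HxZ, HyZ; auto. }
  apply functional_extensionality; intros [|k]; [exact Hxy0|].
  exact (equal_f (column_inj _ _ Hcols) k).
Qed.

End Union.

Lemma unique_closed_proj_bigcup (B : nat -> bset) :
  (forall i, unique_closed_proj (B i)) -> (forall i, unique_closed_proj (fun f => ~ B i f)) ->
  unique_closed_proj (fun f => exists i, B i f).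
Proof.
  intros HB HnB.
  destruct (choice _ HB) as [FB HFB]. destruct (choice _ HnB) as [FN HFN].
  exists (union_witness FB FN). split.
  - apply union_witness_closed; intro i; [apply HFB | apply HFN].
  - assert (FB_B : forall i, unique_witnesses (FB i) (B i)) by apply HFB.
    assert (FN_B : forall i, unique_witnesses (FN i) (fun f => ~ B i f)) by apply HFN.
    intro f. split; [split|].
    + exact (union_witness_exists B FB FN FB_B FN_B f).
    + intros [x Hx]. exists (x 0). exact (union_witness_mem B FB FN FB_B f x Hx).
    + exact (union_witness_unique B FB FN FB_B FN_B f).
Qed.

Lemma unique_closed_proj_open U :
  baire_open U -> unique_closed_proj U /\ unique_closed_proj (fun f => ~ U f).
Proof.
  intro HU.
  set (Cyl := fun n f => forall g, agree g f n -> U g).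
  assert (Cyl_local : forall n f g, agree g f n -> Cyl n f -> Cyl n g).
  { intros n f g Hg Hf h Hh. apply Hf, (agree_trans _ g); assumption. }
  assert (Cyl_compl_local : forall n f g, agree g f n -> ~ Cyl n f -> ~ Cyl n g).
  { intros n f g Hg Hf Hcg. apply Hf, (Cyl_local n g f); auto using agree_sym. }
  assert (U_Cyl : forall f, U f <-> exists n, Cyl n f).
  { intro f. split; [exact (HU f) |]. intros [n Hn]. apply Hn, agree_refl. }
  split.
  - apply (unique_closed_proj_ext (fun f => exists n, Cyl n f)); [| intro f; symmetry; apply U_Cyl].
    apply unique_closed_proj_bigcup; intro n; apply (unique_closed_proj_local n);
      [apply Cyl_local | apply Cyl_compl_local].
  - apply (unique_closed_proj_ext (fun f => forall n, ~ Cyl n f)).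
    + apply unique_closed_proj_bigcap; intro n. apply (unique_closed_proj_local n), Cyl_compl_local.
    + intro f. rewrite U_Cyl. split; [intros H [n Hn]; exact (H n Hn) | intros H n Hn; eauto].
Qed.

Lemma borel_unique_closed_proj B :
  borel B -> unique_closed_proj B /\ unique_closed_proj (fun f => ~ B f).
Proof.
  induction 1 as [A HA | A _ [HA HnA] | Bs _ IH | A B _ [HA HnA] HAB].
  - now apply unique_closed_proj_open.
  - split; [exact HnA|]. apply (unique_closed_proj_ext A _ HA).
    intro f. split; [tauto | apply NNPP].
  - split.
    + apply unique_closed_proj_bigcup; intro n; apply IH.
    + apply (unique_closed_proj_ext (fun f => forall n, ~ Bs n f)).
      * apply unique_closed_proj_bigcap; intro n; apply IH.
      * intro f. split; [intros H [n Hn]; exact (H n Hn) | intros H n Hn; eauto].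
  - split; [apply (unique_closed_proj_ext A) | apply (unique_closed_proj_ext (fun f => ~ A f))];
      auto; intro f; rewrite HAB; tauto.
Qed.

Section Coding.

Variable F : baire -> baire -> Prop.
Variables a b : nat -> nat.

Definition decode (g : baire) : baire := fun k => fst (of_nat (g (a k))).

Definition decode_wit (g : baire) : baire := fun k => snd (of_nat (g (a k))).

(* Position [n] carries a code iff [a (b n) = n], i.e. iff [n] lies in the range of [a]. *)
Definition encode (f x : baire) : baire := fun n =>
  if Nat.eq_dec (a (b n)) n then to_nat (f (b n), x (b n)) else f (b n).

Definition codes : bset := fun g =>
  F (decode g) (decode_wit g) /\ forall n, a (b n) <> n -> g n = decode g (b n).

Lemma codes_closed : closed_rel F -> baire_closed codes.
Proof.
  intro HF.
  apply (baire_closed_diag (fun g y =>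
    F (decode g) (decode_wit y) /\ forall n, a (b n) <> n -> g n = decode g (b n))).
  apply closed_rel_and.
  - apply (closed_rel_comp decode decode_wit F); [| | exact HF].
    + exact (continuous_recode a (fun v => fst (of_nat v))).
    + exact (continuous_recode a (fun v => snd (of_nat v))).
  - apply closed_rel_forall; intro n. apply (closed_rel_impl 0); [intros ? ? ? ? _ _; auto|].
    apply (local_rel_closed (S (max n (a (b n))))). intros f x g y Hg _ Hf.
    unfold decode in *. rewrite (Hg n), (Hg (a (b n))) by lia. exact Hf.
Qed.

Lemma decode_pair g n : a (b n) = n -> g n = to_nat (decode g (b n), decode_wit g (b n)).
Proof.
  intro Hn. unfold decode, decode_wit. rewrite Hn, <- surjective_pairing, cancel_to_of.
  reflexivity.
Qed.

Lemma codes_inj g g' : codes g -> codes g' ->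
  decode g = decode g' -> decode_wit g = decode_wit g' -> g = g'.
Proof.
  intros [_ Hg] [_ Hg'] Hdec Hwit. apply functional_extensionality; intro n.
  destruct (Nat.eq_dec (a (b n)) n) as [Hn|Hn].
  - rewrite (decode_pair g n Hn), (decode_pair g' n Hn), Hdec, Hwit. reflexivity.
  - rewrite (Hg n Hn), (Hg' n Hn), Hdec. reflexivity.
Qed.

Lemma codes_agree g g' n : codes g -> codes g' -> g n = g' n -> decode g (b n) = decode g' (b n).
Proof.
  intros [_ Hg] [_ Hg'] Hgn. destruct (Nat.eq_dec (a (b n)) n) as [Hn|Hn].
  - unfold decode. rewrite Hn, Hgn. reflexivity.
  - rewrite <- (Hg n Hn), <- (Hg' n Hn). exact Hgn.
Qed.

Hypothesis b_a : forall k, b (a k) = k.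

Lemma encode_at_code f x k : encode f x (a k) = to_nat (f k, x k).
Proof.
  unfold encode. rewrite b_a. destruct (Nat.eq_dec (a k) (a k)); [reflexivity | contradiction].
Qed.

Lemma decode_encode f x : decode (encode f x) = f /\ decode_wit (encode f x) = x.
Proof.
  split; apply functional_extensionality; intro k; unfold decode, decode_wit;
    rewrite encode_at_code, cancel_of_to; reflexivity.
Qed.

Lemma encode_codes f x : F f x -> codes (encode f x).
Proof.
  intro Hfx. destruct (decode_encode f x) as [Hf Hx]. split.
  - rewrite Hf, Hx. exact Hfx.
  - intros n Hn. rewrite Hf. unfold encode.
    destruct (Nat.eq_dec (a (b n)) n); [contradiction | reflexivity].
Qed.

End Coding.

Lemma infinite_injective_enum (A : natset) :
  ~ finite_set A -> exists a : nat -> nat, (forall k, A (a k)) /\ (forall i j, a i = a j -> i = j).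
Proof.
  intro HA.
  assert (A_unbounded : forall N, exists n, A n /\ N <= n).
  { intro N. apply NNPP; intro Hno. apply HA. exists N. intros n Hn.
    destruct (Nat.lt_ge_cases n N) as [Hlt|Hge]; [exact Hlt | exfalso; eauto]. }
  destruct (choice _ A_unbounded) as [c Hc].
  set (a := fix a k := match k with 0 => c 0 | S k => c (S (a k)) end).
  assert (a_step : forall k, a k < a (S k)) by (intro k; exact (proj2 (Hc (S (a k))))).
  assert (a_mono : forall i j, i < j -> a i < a j).
  { intros i j Hij. induction Hij; [apply a_step | specialize (a_step m); lia]. }
  exists a. split.
  - intros [|k]; apply Hc.
  - intros i j Hij. destruct (Nat.lt_total i j) as [H|[H|H]]; auto; apply a_mono in H; lia.
Qed.

Lemma left_inverse_off_range (a : nat -> nat) : (forall i j, a i = a j -> i = j) ->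
  exists b, (forall k, b (a k) = k) /\ (forall n, a (b n) <> n -> b n = n).
Proof.
  intro a_inj.
  destruct (choice (fun n m => (forall k, a k = n -> m = k) /\ ((forall k, a k <> n) -> m = n)))
    as [b Hb].
  { intro n. destruct (classic (exists k, a k = n)) as [[k Hk]|Hno].
    - exists k. split; [intros j Hj; apply a_inj; congruence | intro Hall; contradiction (Hall k Hk)].
    - exists n. split; [intros k Hk; exfalso; eauto | reflexivity]. }
  exists b. split.
  - intro k. exact (proj1 (Hb (a k)) k eq_refl).
  - intros n Hn. apply (proj2 (Hb n)). intros k Hk. apply Hn. rewrite (proj1 (Hb n) k Hk). exact Hk.
Qed.

Lemma half_bounds n : 2 * (n / 2) <= n < 2 * (n / 2) + 2.
Proof.
  pose proof (Nat.div_mod_eq n 2). pose proof (Nat.mod_upper_bound n 2 ltac:(lia)). lia.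
Qed.

Section ClosedMED.

Variable I : natset -> Prop.
Variable E : bset.
Variable F : baire -> baire -> Prop.
Hypothesis E_MED : I_MED I E.
Hypothesis F_closed : closed_rel F.
Hypothesis F_E : unique_witnesses F E.

Lemma codes_decode_ED a b g g' : codes F a b g -> codes F a b g' -> g <> g' ->
  I_ED I (decode a g) (decode a g').
Proof.
  intros Hg Hg' Hne.
  assert (decode_E : forall h, codes F a b h -> E (decode a h))
    by (intros h [Hh _]; apply (proj1 (F_E _)); eauto).
  apply (proj1 E_MED); auto. intro Hdec. apply Hne.
  apply (codes_inj F a b); auto.
  exact (proj2 (F_E _) _ _ (proj1 Hg) ltac:(rewrite Hdec; exact (proj1 Hg'))).
Qed.

Lemma codes_onto a b : (forall k, b (a k) = k) ->
  forall f, E f -> exists g, codes F a b g /\ decode a g = f.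
Proof.
  intros b_a f Hf. destruct (proj1 (proj1 (F_E f)) Hf) as [x Hx].
  exists (encode a b f x). split; [apply encode_codes | apply decode_encode]; auto.
Qed.

Hypothesis I_ideal : is_ideal I.
Hypothesis I_fin : contains_fin I.

Lemma closed_MED_of_infinite_member A :
  I A -> ~ finite_set A -> exists G, baire_closed G /\ I_MED I G.
Proof.
  intros HA HA_inf. destruct I_ideal as [_ [I_sub [I_union _]]].
  destruct (infinite_injective_enum A HA_inf) as [a [a_A a_inj]].
  destruct (left_inverse_off_range a a_inj) as [b [b_a b_off]].
  exists (codes F a b). split; [exact (codes_closed F a b F_closed) | split]; unfold I_ED.
  - intros g g' Hg Hg' Hne.
    apply (I_sub _ _ (I_union _ _ HA (codes_decode_ED a b g g' Hg Hg' Hne))).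
    intros n Hn. destruct (Nat.eq_dec (a (b n)) n) as [Hc|Hc].
    + left. rewrite <- Hc. apply a_A.
    + right. pose proof (codes_agree F a b g g' n Hg Hg' Hn) as Hd.
      rewrite (b_off n Hc) in Hd. exact Hd.
  - intro h. destruct (proj2 E_MED h) as [f [Hf Hfh]].
    destruct (codes_onto a b b_a f Hf) as [g [[HgF Hg] Hgf]].
    exists g. split; [split; assumption|]. intro Hgh. apply Hfh.
    apply (I_sub _ _ (I_union _ _ Hgh HA)). intros n Hn.
    destruct (Nat.eq_dec (a (b n)) n) as [Hc|Hc].
    + right. rewrite <- Hc. apply a_A.
    + left. rewrite (Hg n Hc), Hgf, (b_off n Hc). exact Hn.
Qed.

Lemma closed_MED_of_fin :
  (forall A, I A -> finite_set A) -> exists G, baire_closed G /\ I_MED I G.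
Proof.
  intro I_finite.
  set (a := fun k => S (2 * k)). set (b := fun n => n / 2).
  assert (b_a : forall k, b (a k) = k) by (intro k; pose proof (half_bounds (a k)); unfold b, a in *; lia).
  exists (codes F a b). split; [exact (codes_closed F a b F_closed) | split].
  - intros g g' Hg Hg' Hne.
    destruct (I_finite _ (codes_decode_ED a b g g' Hg Hg' Hne)) as [N HN].
    apply I_fin. exists (2 * N). intros n Hn.
    pose proof (HN _ (codes_agree F a b g g' n Hg Hg' Hn)). pose proof (half_bounds n).
    unfold b in *. lia.
  - intro h. destruct (proj2 E_MED (fun k => h (2 * k))) as [f [Hf Hfh]].
    destruct (codes_onto a b b_a f Hf) as [g [[HgF Hg] Hgf]].
    exists g. split; [split; assumption|]. intro Hgh. apply Hfh.
    destruct (I_finite _ Hgh) as [M HM]. apply I_fin. exists M. intros k Hk.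
    assert (b_even : b (2 * k) = k) by (pose proof (half_bounds (2 * k)); unfold b in *; lia).
    assert (Hg_even : g (2 * k) = f k).
    { rewrite (Hg (2 * k)), Hgf, b_even; [reflexivity|]. rewrite b_even. unfold a. lia. }
    assert (2 * k < M) by (apply HM; rewrite Hg_even; exact Hk). lia.
Qed.

End ClosedMED.

Theorem theorem6p2 (I : natset -> Prop) :
  is_ideal I -> contains_fin I ->
  (exists E : bset, borel E /\ I_MED I E) ->
  exists E : bset, baire_closed E /\ I_MED I E.
Proof.
  intros I_ideal I_fin [E [E_borel E_MED]].
  destruct (proj1 (borel_unique_closed_proj E E_borel)) as [F [F_closed F_E]].
  destruct (classic (exists A, I A /\ ~ finite_set A)) as [[A [HA HA_inf]] | Hall].
  - exact (closed_MED_of_infinite_member I E F E_MED F_closed F_E I_ideal A HA HA_inf).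
  - apply (closed_MED_of_fin I E F E_MED F_closed F_E I_fin).
    intros A HA. apply NNPP. intro HA_inf. apply Hall. eauto.
Qed.
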